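(* Let $\alpha$ be an infinite permutation. If for some positive integer $N$, $\alpha$ has an $N$-monotone subpermutation, then $\alpha$ is not equidistributed.
   Context: An infinite permutation is an equivalence class of sequences $(a[n])_{n\ge0}$ of pairwise distinct reals, where two sequences are equivalent if $a[i]<a[j]\iff b[i]<b[j]$ for all $i,j$; write $\alpha=(\alpha[n])_{n\ge0}$ with $\alpha[i]<\alpha[j]$ iff $a[i]<a[j]$ for a representative. A sequence $(a[n])$ in $[0,1]$ is equidistributed if $\lim_{n\to\infty}\frac{\#\{0\le i<n:a[i]<t\}}{n}=t$ for each $t\in[0,1]$; a permutation is equidistributed if it has an equidistributed representative in $[0,1]$. For a strictly increasing sequence of indices $(n_i)_{i\ge1}$, the subpermutation $(\alpha[n_i])$ is $N$-growing (resp. $N$-decreasing) if $n_{i+1}-n_i\le N$ and $\alpha[n_{i+1}]>\alpha[n_i]$ (resp. $<$) for all $i$; it is $N$-monotone if it is $N$-growing or $N$-decreasing. *)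

From Stdlib Require Import Reals Lra Lia List.
Open Scope R_scope.

(* A sequence of pairwise distinct reals (a representative of an infinite
   permutation). *)
Definition distinct_seq (a : nat -> R) : Prop :=
  forall i j : nat, i <> j -> a i <> a j.

(* Two sequences represent the same infinite permutation. *)
Definition same_perm (a b : nat -> R) : Prop :=
  forall i j : nat, a i < a j <-> b i < b j.

Definition count_below (b : nat -> R) (t : R) (n : nat) : nat :=
  length (filter (fun i => if Rlt_dec (b i) t then true else false) (seq 0 n)).

Definition equidistributed_seq (b : nat -> R) : Prop :=
  (forall n, 0 <= b n <= 1) /\
  forall t : R, 0 <= t <= 1 ->
    Un_cv (fun n => INR (count_below b t n) / INR n) t.

Definition equidistributed_perm (a : nat -> R) : Prop :=
  exists b : nat -> R, distinct_seq b /\ same_perm a b /\ equidistributed_seq b.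

Definition N_growing (a : nat -> R) (N : nat) : Prop :=
  exists n : nat -> nat, forall i : nat,
    (n i < n (S i))%nat /\ (n (S i) - n i <= N)%nat /\ a (n i) < a (n (S i)).

Definition N_decreasing (a : nat -> R) (N : nat) : Prop :=
  exists n : nat -> nat, forall i : nat,
    (n i < n (S i))%nat /\ (n (S i) - n i <= N)%nat /\ a (n (S i)) < a (n i).

Definition N_monotone (a : nat -> R) (N : nat) : Prop :=
  N_growing a N \/ N_decreasing a N.

(** An [N]-monotone subpermutation of a representative [b] in [0,1] is a
    bounded monotone sequence, so a tail of it lies in an interval [[t1, t2)]
    of length less than [1/N].  Its indices have gaps at most [N], hence the
    proportion of the first [n] indices [i] with [b i] in [[t1, t2)] is at
    least about [1/N], while equidistribution forces it to tend to
    [t2 - t1 < 1/N]. *)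

From Stdlib Require Import Reals Lra Lia List.
Open Scope R_scope.

Definition count_in (b : nat -> R) (t1 t2 : R) (n : nat) : nat :=
  length (filter (fun i => if Rle_dec t1 (b i) then
                             if Rlt_dec (b i) t2 then true else false
                           else false) (seq 0 n)).

Lemma length_filter_seq_S (f : nat -> bool) (n : nat) :
  length (filter f (seq 0 (S n))) =
  (length (filter f (seq 0 n)) + if f n then 1 else 0)%nat.
Proof.
  rewrite seq_S, filter_app, length_app; simpl.
  now destruct (f n).
Qed.

Lemma count_below_split (b : nat -> R) (t1 t2 : R) (n : nat) : t1 <= t2 ->
  count_below b t2 n = (count_below b t1 n + count_in b t1 t2 n)%nat.
Proof.
  intros Ht; induction n as [|n IHn]; [reflexivity|].
  unfold count_below, count_in in *; rewrite !length_filter_seq_S, IHn.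
  destruct (Rlt_dec (b n) t1), (Rlt_dec (b n) t2), (Rle_dec t1 (b n));
    simpl; lra || lia.
Qed.

Lemma count_in_S_le (b : nat -> R) (t1 t2 : R) (n : nat) :
  (count_in b t1 t2 n <= count_in b t1 t2 (S n))%nat.
Proof. unfold count_in; rewrite length_filter_seq_S; lia. Qed.

Lemma count_in_S_in (b : nat -> R) (t1 t2 : R) (n : nat) : t1 <= b n < t2 ->
  count_in b t1 t2 (S n) = S (count_in b t1 t2 n).
Proof.
  intros [H1 H2]; unfold count_in; rewrite length_filter_seq_S.
  destruct (Rle_dec t1 (b n)), (Rlt_dec (b n) t2); simpl; lra || lia.
Qed.

Lemma count_in_mono (b : nat -> R) (t1 t2 : R) (n n' : nat) : (n <= n')%nat ->
  (count_in b t1 t2 n <= count_in b t1 t2 n')%nat.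
Proof.
  induction 1 as [|n' _ IH]; [lia|].
  pose proof (count_in_S_le b t1 t2 n'); lia.
Qed.

Lemma count_in_density (b : nat -> R) (t1 t2 : R) :
  equidistributed_seq b -> 0 <= t1 <= t2 -> t2 <= 1 ->
  Un_cv (fun n => INR (count_in b t1 t2 n) / INR n) (t2 - t1).
Proof.
  intros [_ Hequi] Ht1 Ht2.
  apply Un_cv_ext with
    (fun n => INR (count_below b t2 n) / INR n - INR (count_below b t1 n) / INR n).
  - intro n; rewrite (count_below_split b t1 t2 n) by lra; rewrite plus_INR.
    unfold Rdiv; ring.
  - apply CV_minus; apply Hequi; lra.
Qed.

Lemma Un_cv_const (c : R) : Un_cv (fun _ => c) c.
Proof.
  intros e He; exists 0%nat; intros n _.
  unfold R_dist; rewrite Rminus_diag, Rabs_R0; exact He.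
Qed.

Section Hitting.

Variables (b : nat -> R) (t1 t2 : R) (N : nat) (m : nat -> nat).
Hypothesis m_step : forall i, (m i < m (S i) /\ m (S i) - m i <= N)%nat.
Hypothesis m_hits : forall i, t1 <= b (m i) < t2.

Lemma count_in_after_hit (j : nat) : (S j <= count_in b t1 t2 (S (m j)))%nat.
Proof.
  induction j as [|j IHj]; rewrite count_in_S_in by apply m_hits; [lia|].
  pose proof (count_in_mono b t1 t2 (S (m j)) (m (S j))).
  destruct (m_step j); lia.
Qed.

Lemma hit_index_le (j : nat) : (m j <= m 0 + j * N)%nat.
Proof. induction j as [|j IHj]; [lia|]. destruct (m_step j); simpl; lia. Qed.

Lemma le_hit_index (j : nat) : (j <= m j)%nat.
Proof. induction j as [|j IHj]; [lia|]. destruct (m_step j); lia. Qed.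

Lemma count_in_lower_bound (n : nat) :
  (n <= m 0 + N * count_in b t1 t2 n)%nat.
Proof.
  enough (H : forall j n, (n <= m j)%nat -> (n <= m 0 + N * count_in b t1 t2 n)%nat)
    by exact (H n n (le_hit_index n)).
  induction j as [|j IHj]; intros k Hk; [lia|].
  destruct (Nat.le_gt_cases k (m j)) as [Hkj|Hkj]; [exact (IHj k Hkj)|].
  assert (Hcount : (S j <= count_in b t1 t2 k)%nat).
  { pose proof (count_in_mono b t1 t2 (S (m j)) k Hkj).
    pose proof (count_in_after_hit j); lia. }
  pose proof (Nat.mul_le_mono_l _ _ N Hcount).
  pose proof (hit_index_le j); destruct (m_step j); lia.
Qed.

Hypothesis N_pos : (0 < N)%nat.

Lemma hit_density_lower_bound (l : R) :
  Un_cv (fun n => INR (count_in b t1 t2 n) / INR n) l -> / INR N <= l.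
Proof.
  intros Hl.
  assert (HN : 0 < INR N) by (apply lt_0_INR; exact N_pos).
  (* Compare at index [n + 1]: at [n = 0] the division [/ INR 0] is junk. *)
  apply Rle_cv_lim with (Un := fun n => (1 - INR (m 0) * RinvN n) * / INR N)
                        (Vn := fun n => INR (count_in b t1 t2 (n + 1)) / INR (n + 1)).
  - intro n; simpl; rewrite plus_INR; simpl.
    pose proof (le_INR _ _ (count_in_lower_bound (n + 1))) as Hlow.
    rewrite !plus_INR, mult_INR in Hlow; simpl in Hlow.
    assert (Hn : 0 < INR n + 1) by (pose proof (pos_INR n); lra).
    replace ((1 - INR (m 0) * / (INR n + 1)) * / INR N)
      with ((INR n + 1 - INR (m 0)) * / (INR N * (INR n + 1))) by (field; lra).
    replace (INR (count_in b t1 t2 (n + 1)) / (INR n + 1))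
      with (INR N * INR (count_in b t1 t2 (n + 1)) * / (INR N * (INR n + 1)))
      by (field; lra).
    apply Rmult_le_compat_r; [left; apply Rinv_0_lt_compat; nra | lra].
  - assert (Hcv : Un_cv (fun n => (1 - INR (m 0) * RinvN n) * / INR N)
                        ((1 - INR (m 0) * 0) * / INR N)).
    { apply CV_mult; [|apply Un_cv_const].
      apply CV_minus; [apply Un_cv_const|].
      apply CV_mult; [apply Un_cv_const | exact RinvN_cv]. }
    now rewrite Rmult_0_r, Rminus_0_r, Rmult_1_l in Hcv.
  - exact (CV_shift' _ 1 l Hl).
Qed.

End Hitting.

Lemma strictly_increasing_lt (u : nat -> R) : (forall i, u i < u (S i)) ->
  forall i j, (i < j)%nat -> u i < u j.
Proof.
  intros Hu i j Hij; induction Hij as [|j _ IH]; [apply Hu|].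
  specialize (Hu j); lra.
Qed.

Lemma increasing_tail_in_short_interval (u : nat -> R) (eps : R) :
  (forall i, u i < u (S i)) -> (forall i, 0 <= u i <= 1) -> 0 < eps ->
  exists K t1 t2, 0 <= t1 /\ t2 <= 1 /\ t2 - t1 < eps /\
    forall i, (K < i)%nat -> t1 < u i < t2.
Proof.
  intros Hu H01 Heps.
  assert (Hgrow : Un_growing u) by (intro i; specialize (Hu i); lra).
  assert (Hub : has_ub u) by (exists 1; intros x [i ->]; apply H01).
  destruct (growing_cv u Hgrow Hub) as [l Hl].
  assert (Hle : forall i, u i <= l) by exact (growing_ineq u l Hgrow Hl).
  assert (Hl1 : l <= 1)
    by exact (Rle_cv_lim (fun i => proj2 (H01 i)) Hl (Un_cv_const 1)).
  destruct (Hl eps Heps) as [K HK].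
  specialize (HK K (le_n K)); unfold R_dist in HK; apply Rabs_def2 in HK.
  exists K, (u K), l; split; [apply H01|]; split; [exact Hl1|]; split; [lra|].
  intros [|i] Hi; [lia|]; split.
  - exact (strictly_increasing_lt u Hu K (S i) Hi).
  - specialize (Hu (S i)); specialize (Hle (S (S i))); lra.
Qed.

Lemma monotone_tail_in_short_interval (u : nat -> R) (eps : R) :
  (forall i, u i < u (S i)) \/ (forall i, u (S i) < u i) ->
  (forall i, 0 <= u i <= 1) -> 0 < eps ->
  exists K t1 t2, 0 <= t1 /\ t2 <= 1 /\ t2 - t1 < eps /\
    forall i, (K < i)%nat -> t1 < u i < t2.
Proof.
  intros [Hinc|Hdec] H01 Heps; [exact (increasing_tail_in_short_interval u eps Hinc H01 Heps)|].
  destruct (increasing_tail_in_short_interval (fun i => 1 - u i) eps)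
    as (K & t1 & t2 & Ht1 & Ht2 & Hshort & Htail).
  - intro i; specialize (Hdec i); lra.
  - intro i; specialize (H01 i); lra.
  - exact Heps.
  - exists K, (1 - t2), (1 - t1); split; [lra|]; split; [lra|]; split; [lra|].
    intros i Hi; specialize (Htail i Hi); simpl in Htail; lra.
Qed.

Lemma N_monotone_subsequence (a b : nat -> R) (N : nat) :
  same_perm a b -> N_monotone a N ->
  exists m : nat -> nat, (forall i, m i < m (S i) /\ m (S i) - m i <= N)%nat /\
    ((forall i, b (m i) < b (m (S i))) \/ (forall i, b (m (S i)) < b (m i))).
Proof.
  intros Hab [[m Hm]|[m Hm]]; exists m;
    (split; [intro i; destruct (Hm i) as (? & ? & _); lia|]);
    [left|right]; intro i; apply Hab, (Hm i).
Qed.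

Theorem proposition1 (a : nat -> R) (N : nat) :
  distinct_seq a -> (0 < N)%nat -> N_monotone a N -> ~ equidistributed_perm a.
Proof.
  intros _ N_pos Hmono [b [_ [Hab Hequi]]].
  pose proof Hequi as [Hb01 _].
  destruct (N_monotone_subsequence a b N Hab Hmono) as [m [Hstep Hmon]].
  assert (Heps : 0 < / INR N) by (apply Rinv_0_lt_compat, lt_0_INR; exact N_pos).
  destruct (monotone_tail_in_short_interval (fun i => b (m i)) (/ INR N) Hmon
              (fun i => Hb01 (m i)) Heps) as (K & t1 & t2 & Ht1 & Ht2 & Hshort & Htail).
  set (m' := fun i => m (S (K + i))).
  assert (Hhits : forall i, t1 <= b (m' i) < t2).
  { intro i; destruct (Htail (S (K + i))) as [H1 H2]; [lia|]; unfold m'; lra. }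
  assert (Hstep' : forall i, (m' i < m' (S i) /\ m' (S i) - m' i <= N)%nat).
  { intro i; unfold m'; rewrite <- Nat.add_succ_r; apply Hstep. }
  assert (Ht12 : t1 <= t2) by (destruct (Hhits 0%nat); lra).
  pose proof (hit_density_lower_bound b t1 t2 N m' Hstep' Hhits N_pos (t2 - t1)
                (count_in_density b t1 t2 Hequi (conj Ht1 Ht12) Ht2)).
  lra.
Qed.
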